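(* Let $M\in\mathcal{G}$. In the bosonic case, $C_M=\frac12(M-JMJ)$ is always invertible. In the fermionic case, $C_M$ is invertible if and only if $\Delta_{M^{-1}}=-M^{-1}JMJ$ has no eigenvalue equal to $-1$.
   Context: Bosonic case: $V=\mathbb{R}^{2N}$ with symplectic form $\Omega=\begin{pmatrix}0&\mathbb{1}\\-\mathbb{1}&0\end{pmatrix}$, $\mathcal{G}=\mathrm{Sp}(2N,\mathbb{R})=\{M\in\mathrm{SL}(2N,\mathbb{R}):M\Omega M^\intercal=\Omega\}$, and $J$ a real linear map with $J^2=-\mathbb{1}$, $J\Omega J^\intercal=\Omega$, $-J\Omega$ positive definite. Fermionic case: $V=\mathbb{R}^{2N}$ with metric $G=\mathbb{1}$, $\mathcal{G}=\mathrm{SO}(2N,\mathbb{R})$, $J$ real with $J^2=-\mathbb{1}$ and $JGJ^\intercal=G$. *)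

From HB Require Import structures.
From mathcomp Require Import all_boot all_order all_algebra.
Set Implicit Arguments. Unset Strict Implicit. Unset Printing Implicit Defensive.
Import Order.TTheory GRing.Theory Num.Theory.
Local Open Scope ring_scope.

Definition Omega (R : realFieldType) (N : nat) : 'M[R]_(N + N) :=
  block_mx 0 1%:M (- 1%:M) 0.

Definition symplectic (R : realFieldType) (N : nat) (M : 'M[R]_(N + N)) : Prop :=
  \det M = 1 /\ M *m Omega R N *m M^T = Omega R N.

(* SO(2N,R) with metric G = 1 *)
Definition special_orthogonal (R : realFieldType) (N : nat) (M : 'M[R]_(N + N)) : Prop :=
  \det M = 1 /\ M *m M^T = 1%:M.

Definition posdef (R : realFieldType) (n : nat) (A : 'M[R]_n) : Prop :=
  A^T = A /\ forall v : 'rV[R]_n, v != 0 -> 0 < (v *m A *m v^T) 0 0.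

Definition bos_cplx (R : realFieldType) (N : nat) (J : 'M[R]_(N + N)) : Prop :=
  J *m J = - 1%:M /\ J *m Omega R N *m J^T = Omega R N /\
  posdef (- (J *m Omega R N)).

Definition ferm_cplx (R : realFieldType) (N : nat) (J : 'M[R]_(N + N)) : Prop :=
  J *m J = - 1%:M /\ J *m 1%:M *m J^T = 1%:M.

Definition C_of (R : realFieldType) (n : nat) (J M : 'M[R]_n) : 'M[R]_n :=
  (2%:R)^-1 *: (M - J *m M *m J).

Definition Delta_of (R : realFieldType) (n : nat) (J M : 'M[R]_n) : 'M[R]_n :=
  - (M *m J *m invmx M *m J).

From HB Require Import structures.
From mathcomp Require Import all_boot all_order all_algebra.
Set Implicit Arguments.
Unset Strict Implicit.
Unset Printing Implicit Defensive.

Import Order.TTheory GRing.Theory Num.Theory.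
Local Open Scope ring_scope.

(* Bosonic case: with G := - J Omega, the symplectic and compatibility
   relations give M G (J M J)^T = - G.  A row vector v killed by
   C_M = (M - J M J)/2 satisfies v M = v J M J, so the G-norm of v M equals
   - v G v^T; positivity of G forces v = 0.
   Fermionic case: C_M = M (1 + Delta_{M^-1}) / 2 and M is invertible, so
   C_M is invertible iff 1 + Delta_{M^-1} is, i.e. iff -1 is not an
   eigenvalue of Delta_{M^-1}. *)

Lemma eigenvalue_unitmx (F : fieldType) (n : nat) (A : 'M[F]_n) (a : F) :
  eigenvalue A a = (A - a%:M \notin unitmx).
Proof. by rewrite /eigenvalue /eigenspace kermx_eq0 row_free_unit. Qed.

Lemma unitmx_C_of (R : realFieldType) (n : nat) (J M : 'M[R]_n) :
  (C_of J M \in unitmx) = (M - J *m M *m J \in unitmx).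
Proof. by rewrite unitmxZ // unitfE invr_eq0 pnatr_eq0. Qed.

Lemma posdef_form_ge0 (R : realFieldType) (n : nat) (G : 'M[R]_n) (v : 'rV_n) :
  posdef G -> 0 <= (v *m G *m v^T) 0 0.
Proof.
move=> [_ Gpos]; have [->|v_neq0] := eqVneq v 0; last exact/ltW/Gpos.
by rewrite !mul0mx mxE.
Qed.

Lemma posdef_sub_unitmx (R : realFieldType) (n : nat) (G A B : 'M[R]_n) :
  posdef G -> A *m G *m B^T = - G -> A - B \in unitmx.
Proof.
move=> Gpd AGB; rewrite -row_free_unit; apply: inj_row_free => v vAB0.
have vA_vB : v *m A = v *m B by apply/eqP; rewrite -subr_eq0 -mulmxBr vAB0.
have form_vA : (v *m A) *m G *m (v *m A)^T = - (v *m G *m v^T).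
  rewrite [X in _ *m X^T]vA_vB trmx_mul !mulmxA -(mulmxA v A G).
  by rewrite -(mulmxA v (A *m G)) AGB mulmxN mulNmx.
have := posdef_form_ge0 (v *m A) Gpd; rewrite form_vA mxE oppr_ge0 leNgt.
by apply/contraNeq => v_neq0; case: Gpd => _; apply.
Qed.

Section Bosonic.

Variables (R : realFieldType) (N : nat) (J M : 'M[R]_(N + N)).
Hypotheses (JJ : J *m J = - 1%:M) (JOmega : J *m Omega R N *m J^T = Omega R N).
Hypothesis MOmega : M *m Omega R N *m M^T = Omega R N.

Let G := - (J *m Omega R N).

Lemma Omega_trJ : Omega R N *m J^T = G.
Proof.
by rewrite -{1}JOmega -mulmxA -trmx_mul JJ linearN /= trmx1 mulmxN mulmx1.
Qed.

Lemma symplectic_anti_congruence : M *m G *m (J *m M *m J)^T = - G.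
Proof.
rewrite !trmx_mul !mulmxA /G mulmxN !mulNmx -(mulmxA M) JOmega MOmega.
by rewrite Omega_trJ.
Qed.

End Bosonic.

Lemma sub_conj_Delta (R : realFieldType) (n : nat) (J M : 'M[R]_n) :
  M \in unitmx -> M - J *m M *m J = M *m (Delta_of J (invmx M) - (-1)%:M).
Proof.
move=> Mu; rewrite /Delta_of invmxK raddfN /= opprK mulmxDr mulmx1.
by rewrite mulmxN !mulmxA mulmxV // mul1mx addrC.
Qed.

Theorem lemma1 (R : realFieldType) (N : nat) :
  (forall J M : 'M[R]_(N + N), bos_cplx J -> symplectic M ->
     C_of J M \in unitmx) /\
  (forall J M : 'M[R]_(N + N), ferm_cplx J -> special_orthogonal M ->
     (C_of J M \in unitmx <-> ~ eigenvalue (Delta_of J (invmx M)) (-1))).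
Proof.
split.
  move=> J M [JJ [JOmega Gpd]] [_ MOmega]; rewrite unitmx_C_of.
  exact/(posdef_sub_unitmx Gpd)/symplectic_anti_congruence.
move=> J M _ [detM _].
have Mu : M \in unitmx by rewrite unitmxE detM unitr1.
rewrite unitmx_C_of sub_conj_Delta // unitmx_mul Mu eigenvalue_unitmx /=.
by split=> [-> | /negP/negbNE].
Qed.
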